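(* Let $G$ be a group, $\mathcal{C}$ a (strict) monoidal category and $T$ a partial action of $G$ on $\mathcal{C}$ generated by a family of central idempotent objects $\{\mathbb{1}_g\}_{g\in G}$. Then for all $g,h\in G$ there is an isomorphism $\varphi^g_{gh}\colon\mathbb{1}_g\otimes\mathbb{1}_{gh}\to T_g(\mathbb{1}_{g^{-1}}\otimes\mathbb{1}_h)$.
   Context: Central idempotent: an object $e$ of $\mathcal{C}$ with an isomorphism $\Phi_e\colon e\otimes e\to e$ and a natural isomorphism $\sigma^e\colon e\otimes-\Rightarrow-\otimes e$ satisfying $\Phi_e(e\otimes\Phi_e)=\Phi_e(\Phi_e\otimes e)$, $\Phi_e\sigma^e_e=\Phi_e$, $(A\otimes\Phi_e)(\sigma^e_A\otimes e)(e\otimes\sigma^e_A)=\sigma^e_A(\Phi_e\otimes A)$ and $\sigma^e_{A\otimes B}=(A\otimes\sigma^e_B)(\sigma^e_A\otimes B)$. For a subcategory $\mathcal{D}$, $\overline{\mathcal{D}}$ is the smallest subcategory containing $\mathcal{D}$ closed under isomorphisms; $e\otimes\mathcal{C}$ is the subcategory of objects $e\otimes X$ and morphisms $e\otimes f$. For a central idempotent $e$, $\overline{e\otimes\mathcal{C}}$ is an ideal of $\mathcal{C}$ (closed under isomorphisms and under tensoring on either side by arbitrary objects) and is a monoidal category with unit $e$. A partial action of $G$ on $\mathcal{C}$ generated by central idempotents $\{\mathbb{1}_g\}_{g\in G}$ consists of: the ideals $\mathcal{C}_g=\overline{\mathbb{1}_g\otimes\mathcal{C}}$ with $\mathbb{1}_e=\mathbb{1}$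 the unit of $\mathcal{C}$ (so $\mathcal{C}_e=\mathcal{C}$); monoidal equivalences $(T_g,J^g)\colon\mathcal{C}_{g^{-1}}\to\mathcal{C}_g$, where $J^g\colon T_g(-)\otimes T_g(-)\Rightarrow T_g(-\otimes-)$ is a natural isomorphism satisfying the hexagon axiom and there is an isomorphism $\varphi^g\colon\mathbb{1}_g\to T_g(\mathbb{1}_{g^{-1}})$ compatible with the unit constraints; such that the restriction of $T_g$ to $\mathcal{C}_{g^{-1}}\cap\mathcal{C}_h$ is a semigroupal (here monoidal) equivalence onto $\mathcal{C}_g\cap\mathcal{C}_{gh}$; a natural isomorphism of semigroupal functors $u\colon\mathrm{Id}_{\mathcal{C}}\Rightarrow T_e$ (i.e. $J^e_{X,Y}\circ(u_X\otimes u_Y)=u_{X\otimes Y}$); and natural isomorphisms $\gamma_{g,h}\colon T_gT_h\Rightarrow T_{gh}$ of functors $\mathcal{C}_{h^{-1}}\cap\mathcal{C}_{h^{-1}g^{-1}}\to\mathcal{C}_g\cap\mathcal{C}_{gh}$ satisfying $J^{gh}_{X,Y}\circ((\gamma_{g,h})_X\otimes(\gamma_{g,h})_Y)=(\gamma_{g,h})_{X\otimes Y}\circ T_g(J^h_{X,Y})\circ J^g_{T_h(X),T_h(Y)}$; moreover $(\gamma_{gh,k})_X\circ(\gamma_{g,h})_{T_k(X)}=(\gamma_{g,hk})_X\circ T_g((\gamma_{h,k})_X)$ for $X\in\mathcal{C}_{k^{-1}}\cap\mathcal{C}_{k^{-1}h^{-1}}\cap\mathcal{C}_{k^{-1}h^{-1}g^{-1}}$,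 and for $X\in\mathcal{C}_{g^{-1}}$ the morphisms $u_{T_g(X)}$ and $(\gamma_{e,g})_X$ are mutually inverse, as are $T_g(u_X)$ and $(\gamma_{g,e})_X$. *)

Set Implicit Arguments.
Unset Strict Implicit.

Record Group := {
  gcar :> Type;
  gmul : gcar -> gcar -> gcar;
  ginv : gcar -> gcar;
  gone : gcar;
  gmulA : forall a b c, gmul a (gmul b c) = gmul (gmul a b) c;
  gmul1l : forall a, gmul gone a = a;
  gmul1r : forall a, gmul a gone = a;
  gmulVl : forall a, gmul (ginv a) a = gone;
  gmulVr : forall a, gmul a (ginv a) = gone }.

Record Category := {
  Ob :> Type;
  Hom : Ob -> Ob -> Type;
  cid : forall X, Hom X X;
  comp : forall X Y Z, Hom Y Z -> Hom X Y -> Hom X Z;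
  comp_idl : forall X Y (f : Hom X Y), comp (cid Y) f = f;
  comp_idr : forall X Y (f : Hom X Y), comp f (cid X) = f;
  compA : forall X Y Z W (f : Hom X Y) (g : Hom Y Z) (h : Hom Z W),
    comp h (comp g f) = comp (comp h g) f }.

Arguments Hom {c} _ _.
Arguments cid {c} _.
Arguments comp {c X Y Z} _ _.

Notation "g ∘ f" := (comp g f) (at level 40, left associativity).

Definition is_iso (C : Category) (X Y : C) (f : Hom X Y) : Prop :=
  exists g : Hom Y X, g ∘ f = cid X /\ f ∘ g = cid Y.

Record MonoidalCategory := {
  mcat :> Category;
  tens : mcat -> mcat -> mcat;
  tensf : forall (X X' Y Y' : mcat), Hom X X' -> Hom Y Y' -> Hom (tens X Y) (tens X' Y');
  munit : mcat;
  assoc : forall X Y Z : mcat, Hom (tens X (tens Y Z)) (tens (tens X Y) Z);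
  lunit : forall X : mcat, Hom (tens munit X) X;
  runit : forall X : mcat, Hom (tens X munit) X;
  tensf_id : forall X Y : mcat, tensf (cid X) (cid Y) = cid (tens X Y);
  tensf_comp : forall (X X' X'' Y Y' Y'' : mcat) (f : Hom X X') (g : Hom X' X'')
      (f' : Hom Y Y') (g' : Hom Y' Y''),
    tensf (g ∘ f) (g' ∘ f') = tensf g g' ∘ tensf f f';
  assoc_iso : forall X Y Z, is_iso (assoc X Y Z);
  lunit_iso : forall X, is_iso (lunit X);
  runit_iso : forall X, is_iso (runit X);
  assoc_nat : forall X X' Y Y' Z Z' (f : Hom X X') (g : Hom Y Y') (h : Hom Z Z'),
    assoc X' Y' Z' ∘ tensf f (tensf g h)
    = tensf (tensf f g) h ∘ assoc X Y Z;
  lunit_nat : forall X Y (f : Hom X Y), f ∘ lunit X = lunit Y ∘ tensf (cid munit) f;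
  runit_nat : forall X Y (f : Hom X Y), f ∘ runit X = runit Y ∘ tensf f (cid munit);
  pentagon : forall X Y Z W,
    assoc (tens X Y) Z W ∘ assoc X Y (tens Z W)
    = tensf (assoc X Y Z) (cid W) ∘ assoc X (tens Y Z) W
      ∘ tensf (cid X) (assoc Y Z W);
  triangle : forall X Y,
    tensf (runit X) (cid Y) ∘ assoc X munit Y = tensf (cid X) (lunit Y) }.

Arguments tens {m} _ _.
Arguments tensf {m X X' Y Y'} _ _.
Arguments munit : clear implicits.
Arguments assoc {m} X Y Z.
Arguments lunit {m} X.
Arguments runit {m} X.

Notation "X ⊗ Y" := (tens X Y) (at level 35, right associativity).

(* Strictness: the associativity and unit constraints are identities
   (the objects coincide and the constraints are the transported identities). *)
Definition is_strict (C : MonoidalCategory) : Prop :=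
  (forall X Y Z : C, exists e : X ⊗ (Y ⊗ Z) = (X ⊗ Y) ⊗ Z,
      assoc X Y Z = eq_rect _ (Hom (X ⊗ (Y ⊗ Z))) (cid _) _ e) /\
  (forall X : C, exists e : munit C ⊗ X = X,
      lunit X = eq_rect _ (Hom (munit C ⊗ X)) (cid _) _ e) /\
  (forall X : C, exists e : X ⊗ munit C = X,
      runit X = eq_rect _ (Hom (X ⊗ munit C)) (cid _) _ e).

Definition inv_of (C : Category) (X Y : C) (f : Hom X Y) (g : Hom Y X) : Prop :=
  g ∘ f = cid X /\ f ∘ g = cid Y.

(* The paper's (strict) axioms, with the (identity) associators made explicit. *)
Record CentralIdempotent (C : MonoidalCategory) (e : C) := {
  ci_Phi : Hom (e ⊗ e) e;
  ci_sigma : forall A : C, Hom (e ⊗ A) (A ⊗ e);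
  ci_Phi_iso : is_iso ci_Phi;
  ci_sigma_iso : forall A, is_iso (ci_sigma A);
  ci_sigma_nat : forall (A B : C) (f : Hom A B),
    tensf f (cid e) ∘ ci_sigma A = ci_sigma B ∘ tensf (cid e) f;
  ci_ax1 : ci_Phi ∘ tensf (cid e) ci_Phi = ci_Phi ∘ tensf ci_Phi (cid e) ∘ assoc e e e;
  ci_ax2 : ci_Phi ∘ ci_sigma e = ci_Phi;
  (* (A ⊗ Phi)(sigma_A ⊗ e)(e ⊗ sigma_A) = sigma_A (Phi ⊗ A) *)
  ci_ax3 : forall A : C, forall ainv : Hom ((e ⊗ e) ⊗ A) (e ⊗ (e ⊗ A)),
    forall binv : Hom ((A ⊗ e) ⊗ e) (A ⊗ (e ⊗ e)),
    inv_of (assoc e e A) ainv -> inv_of (assoc A e e) binv ->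
    tensf (cid A) ci_Phi ∘ binv ∘ tensf (ci_sigma A) (cid e) ∘ assoc e A e
      ∘ tensf (cid e) (ci_sigma A) ∘ ainv
    = ci_sigma A ∘ tensf ci_Phi (cid A);
  (* sigma_{A ⊗ B} = (A ⊗ sigma_B)(sigma_A ⊗ B) *)
  ci_ax4 : forall (A B : C) (binv : Hom ((A ⊗ e) ⊗ B) (A ⊗ (e ⊗ B))),
    inv_of (assoc A e B) binv ->
    ci_sigma (A ⊗ B)
    = assoc A B e ∘ tensf (cid A) (ci_sigma B) ∘ binv
      ∘ tensf (ci_sigma A) (cid B) ∘ assoc e A B }.

Record Subcat (C : Category) := {
  sob : C -> Prop;
  smor : forall X Y : C, Hom X Y -> Prop }.

Arguments smor {C} s {X Y} _.

Definition subcat_meet (C : Category) (S S' : Subcat C) : Subcat C :=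
  {| sob := fun X => sob S X /\ sob S' X;
     smor := fun X Y f => smor S f /\ smor S' f |}.

(* The smallest subcategory containing e ⊗ C and closed under isomorphisms. *)
Inductive cl_ob (C : MonoidalCategory) (e : C) : C -> Prop :=
| clo_base : forall X : C, cl_ob e (e ⊗ X)
| clo_iso : forall (X Y : C) (f : Hom X Y), is_iso f -> cl_ob e X -> cl_ob e Y.

Inductive cl_mor (C : MonoidalCategory) (e : C) : forall X Y : C, Hom X Y -> Prop :=
| clm_base : forall (X Y : C) (f : Hom X Y), cl_mor e (tensf (cid e) f)
| clm_iso : forall (X Y : C) (f : Hom X Y), is_iso f -> cl_ob e X -> cl_mor e f
| clm_id : forall X : C, cl_ob e X -> cl_mor e (cid X)
| clm_comp : forall (X Y Z : C) (f : Hom X Y) (g : Hom Y Z),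
    cl_mor e f -> cl_mor e g -> cl_mor e (g ∘ f).

Definition ideal_of (C : MonoidalCategory) (e : C) : Subcat C :=
  {| sob := cl_ob e; smor := fun X Y f => @cl_mor C e X Y f |}.

(* A functor S -> S' between subcategories of C; the object map is extended
   arbitrarily outside S (harmless), the morphism map takes a membership proof. *)
Record PFunctor (C : Category) (S S' : Subcat C) := {
  pf_ob : C -> C;
  pf_hom : forall (X Y : C) (f : Hom X Y), smor S f -> Hom (pf_ob X) (pf_ob Y);
  pf_ob_in : forall X, sob S X -> sob S' (pf_ob X);
  pf_hom_in : forall X Y (f : Hom X Y) (p : smor S f), smor S' (pf_hom p);
  pf_id : forall X (p : smor S (cid X)), pf_hom p = cid (pf_ob X);
  pf_comp : forall X Y Z (f : Hom X Y) (g : Hom Y Z)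
      (pf : smor S f) (pg : smor S g) (pgf : smor S (g ∘ f)),
    pf_hom pgf = pf_hom pg ∘ pf_hom pf }.

Arguments pf_ob {C S S'} _ _.
Arguments pf_hom {C S S'} _ {X Y f} _.

Definition equiv_onto (C : Category) (S S' : Subcat C) (F : PFunctor S S')
    (D D' : Subcat C) : Prop :=
  (forall X, sob D X -> sob D' (pf_ob F X)) /\
  (forall X Y (f : Hom X Y) (p : smor S f), smor D f -> smor D' (pf_hom F p)) /\
  (forall X Y (f f' : Hom X Y) (p : smor S f) (p' : smor S f'),
      smor D f -> smor D f' -> pf_hom F p = pf_hom F p' -> f = f') /\
  (forall X Y (k : Hom (pf_ob F X) (pf_ob F Y)), sob D X -> sob D Y -> smor D' k ->
      exists (f : Hom X Y) (p : smor S f), smor D f /\ pf_hom F p = k) /\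
  (forall Z, sob D' Z ->
      exists X (k : Hom (pf_ob F X) Z), sob D X /\ smor D' k /\ is_iso k).

Record PAData (G : Group) (C : MonoidalCategory) := {
  one : G -> C;
  one_ci : forall g, CentralIdempotent (one g);
  T : forall g : G, PFunctor (ideal_of (one (ginv g))) (ideal_of (one g));
  J : forall (g : G) (X Y : C), sob (ideal_of (one (ginv g))) X ->
        sob (ideal_of (one (ginv g))) Y ->
        Hom (pf_ob (T g) X ⊗ pf_ob (T g) Y) (pf_ob (T g) (X ⊗ Y));
  phi : forall g : G, Hom (one g) (pf_ob (T g) (one (ginv g)));
  lu : forall (g : G) (X : C), sob (ideal_of (one g)) X -> Hom (one g ⊗ X) X;
  ru : forall (g : G) (X : C), sob (ideal_of (one g)) X -> Hom (X ⊗ one g) X;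
  u : forall X : C, Hom X (pf_ob (T (gone G)) X);
  gam : forall (g h : G) (X : C),
    sob (subcat_meet (ideal_of (one (ginv h))) (ideal_of (one (gmul (ginv h) (ginv g))))) X ->
    Hom (pf_ob (T g) (pf_ob (T h) X)) (pf_ob (T (gmul g h)) X) }.

Arguments one {G C} _ _.
Arguments T {G C} _ _.
Arguments J {G C} _ _ {X Y} _ _.
Arguments phi {G C} _ _.
Arguments lu {G C} _ _ {X} _.
Arguments ru {G C} _ _ {X} _.
Arguments u {G C} _ _.
Arguments gam {G C} _ _ _ {X} _.

Section PartialActionAxioms.
Variables (G : Group) (C : MonoidalCategory) (P : PAData G C).

Definition Cg (g : G) : Subcat C := ideal_of (one P g).
Definition Tob (g : G) (X : C) : C := pf_ob (T P g) X.
Definition Dom2 (g h : G) : Subcat C :=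
  subcat_meet (Cg (ginv h)) (Cg (gmul (ginv h) (ginv g))).

Definition is_partial_action : Prop :=
  one P (gone G) = munit C /\
  (forall g, equiv_onto (T P g) (Cg (ginv g)) (Cg g)) /\
  (forall g X Y (pX : sob (Cg (ginv g)) X) (pY : sob (Cg (ginv g)) Y), is_iso (J P g pX pY)) /\
  (forall g X X' Y Y' (f : Hom X X') (k : Hom Y Y')
      (pX : sob (Cg (ginv g)) X) (pY : sob (Cg (ginv g)) Y)
      (pX' : sob (Cg (ginv g)) X') (pY' : sob (Cg (ginv g)) Y')
      (pf : smor (Cg (ginv g)) f) (pk : smor (Cg (ginv g)) k)
      (pfk : smor (Cg (ginv g)) (tensf f k)),
    pf_hom (T P g) pfk ∘ J P g pX pY = J P g pX' pY' ∘ tensf (pf_hom (T P g) pf) (pf_hom (T P g) pk)) /\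
  (forall g X Y Z (pX : sob (Cg (ginv g)) X) (pY : sob (Cg (ginv g)) Y)
      (pZ : sob (Cg (ginv g)) Z) (pXY : sob (Cg (ginv g)) (X ⊗ Y))
      (pYZ : sob (Cg (ginv g)) (Y ⊗ Z)) (pa : smor (Cg (ginv g)) (assoc X Y Z)),
    pf_hom (T P g) pa ∘ J P g pX pYZ ∘ tensf (cid (Tob g X)) (J P g pY pZ)
    = J P g pXY pZ ∘ tensf (J P g pX pY) (cid (Tob g Z)) ∘ assoc (Tob g X) (Tob g Y) (Tob g Z)) /\
  (forall g X (pX : sob (Cg g) X), is_iso (lu P g pX) /\ is_iso (ru P g pX)) /\
  (forall g X Y (f : Hom X Y) (pX : sob (Cg g) X) (pY : sob (Cg g) Y), smor (Cg g) f ->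
      f ∘ lu P g pX = lu P g pY ∘ tensf (cid (one P g)) f /\
      f ∘ ru P g pX = ru P g pY ∘ tensf f (cid (one P g))) /\
  (forall g X Y (pX : sob (Cg g) X) (pY : sob (Cg g) Y),
      tensf (ru P g pX) (cid Y) ∘ assoc X (one P g) Y = tensf (cid X) (lu P g pY)) /\
  (forall g, is_iso (phi P g)) /\
  (forall g X (pX : sob (Cg (ginv g)) X) (pU : sob (Cg (ginv g)) (one P (ginv g)))
      (pTX : sob (Cg g) (Tob g X)) (pl : smor (Cg (ginv g)) (lu P (ginv g) pX)),
    pf_hom (T P g) pl ∘ J P g pU pX ∘ tensf (phi P g) (cid (Tob g X)) = lu P g pTX) /\
  (forall g X (pX : sob (Cg (ginv g)) X) (pU : sob (Cg (ginv g)) (one P (ginv g)))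
      (pTX : sob (Cg g) (Tob g X)) (pr : smor (Cg (ginv g)) (ru P (ginv g) pX)),
    pf_hom (T P g) pr ∘ J P g pX pU ∘ tensf (cid (Tob g X)) (phi P g) = ru P g pTX) /\
  (forall g h, equiv_onto (T P g) (subcat_meet (Cg (ginv g)) (Cg h))
                                  (subcat_meet (Cg g) (Cg (gmul g h)))) /\
  (forall X, is_iso (u P X)) /\
  (forall X Y (f : Hom X Y) (p : smor (Cg (ginv (gone G))) f),
      pf_hom (T P (gone G)) p ∘ u P X = u P Y ∘ f) /\
  (forall X Y (pX : sob (Cg (ginv (gone G))) X) (pY : sob (Cg (ginv (gone G))) Y),
      J P (gone G) pX pY ∘ tensf (u P X) (u P Y) = u P (X ⊗ Y)) /\
  (forall g h X (pX : sob (Dom2 g h) X), is_iso (gam P g h pX)) /\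
  (forall g h X Y (f : Hom X Y) (pX : sob (Dom2 g h) X) (pY : sob (Dom2 g h) Y)
      (ph : smor (Cg (ginv h)) f) (pg : smor (Cg (ginv g)) (pf_hom (T P h) ph))
      (pgh : smor (Cg (ginv (gmul g h))) f),
    smor (Dom2 g h) f ->
    pf_hom (T P (gmul g h)) pgh ∘ gam P g h pX = gam P g h pY ∘ pf_hom (T P g) pg) /\
  (forall g h X Y (pX : sob (Dom2 g h) X) (pY : sob (Dom2 g h) Y)
      (pXY : sob (Dom2 g h) (X ⊗ Y))
      (qX : sob (Cg (ginv (gmul g h))) X) (qY : sob (Cg (ginv (gmul g h))) Y)
      (rX : sob (Cg (ginv h)) X) (rY : sob (Cg (ginv h)) Y)
      (sX : sob (Cg (ginv g)) (Tob h X)) (sY : sob (Cg (ginv g)) (Tob h Y))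
      (pJ : smor (Cg (ginv g)) (J P h rX rY)),
    J P (gmul g h) qX qY ∘ tensf (gam P g h pX) (gam P g h pY)
    = gam P g h pXY ∘ pf_hom (T P g) pJ ∘ J P g sX sY) /\
  (forall g h k X,
    sob (subcat_meet (subcat_meet (Cg (ginv k)) (Cg (gmul (ginv k) (ginv h))))
                     (Cg (gmul (gmul (ginv k) (ginv h)) (ginv g)))) X ->
    forall (p1 : sob (Dom2 h k) X) (p2 : sob (Dom2 g h) (Tob k X))
      (p3 : sob (Dom2 (gmul g h) k) X) (p4 : sob (Dom2 g (gmul h k)) X)
      (p5 : smor (Cg (ginv g)) (gam P h k p1)),
    eq_rect _ (fun a => Hom (Tob g (Tob h (Tob k X))) (Tob a X))
      (gam P g (gmul h k) p4 ∘ pf_hom (T P g) p5) _ (gmulA g h k)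
    = gam P (gmul g h) k p3 ∘ gam P g h p2) /\
  (forall g X, sob (Cg (ginv g)) X ->
    forall (p : sob (Dom2 (gone G) g) X),
    inv_of (u P (Tob g X))
      (eq_rect _ (fun a => Hom (Tob (gone G) (Tob g X)) (Tob a X)) (gam P (gone G) g p) _ (gmul1l g))) /\
  (forall g X, sob (Cg (ginv g)) X ->
    forall (p : sob (Dom2 g (gone G)) X) (q : smor (Cg (ginv g)) (u P X)),
    inv_of (pf_hom (T P g) q)
      (eq_rect _ (fun a => Hom (Tob g (Tob (gone G) X)) (Tob a X)) (gam P g (gone G) p) _ (gmul1r g))).

End PartialActionAxioms.

From Stdlib Require Import Setoid Morphisms.
Set Implicit Arguments.
Unset Strict Implicit.

(* Put U := 1_{g^-1} ⊗ 1_h and V := 1_g ⊗ 1_{gh}.  An object lying in two ideals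
   C_e ∩ C_f absorbs e ⊗ f on either side, since e ⊗ e ≅ e and e is central.
   As V ∈ C_g ∩ C_{gh}, essential surjectivity of the restriction of T_g gives
   V ≅ T_g X with X ∈ C_{g^-1} ∩ C_h, and then, T_g U being in C_g ∩ C_{gh},
     T_g U ≅ V ⊗ T_g U ≅ T_g X ⊗ T_g U ≅ T_g (X ⊗ U) ≅ T_g X ≅ V. *)

Definition isomorphic (C : Category) (X Y : C) : Prop :=
  exists f : Hom X Y, is_iso f.

Section Isomorphic.
Variable C : Category.

Lemma isomorphic_refl (X : C) : isomorphic X X.
Proof. exists (cid X), (cid X). split; apply comp_idl. Qed.

Lemma isomorphic_sym (X Y : C) : isomorphic X Y -> isomorphic Y X.
Proof. intros [f [f' [Hff' Hf'f]]]. exists f', f. split; assumption. Qed.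

Lemma isomorphic_trans (X Y Z : C) :
  isomorphic X Y -> isomorphic Y Z -> isomorphic X Z.
Proof.
  intros [f [f' [Hf'f Hff']]] [k [k' [Hk'k Hkk']]].
  exists (k ∘ f), (f' ∘ k'). split.
  - rewrite <- compA, (compA f k k'), Hk'k, comp_idl. exact Hf'f.
  - rewrite <- compA, (compA k' f' f), Hff', comp_idl. exact Hkk'.
Qed.

#[global] Instance isomorphic_equiv : Equivalence (@isomorphic C).
Proof.
  split; intro; [apply isomorphic_refl | apply isomorphic_sym | apply isomorphic_trans].
Qed.

End Isomorphic.

Section MonoidalIsomorphic.
Variable C : MonoidalCategory.

#[global] Instance tens_isomorphic :
  Proper (@isomorphic C ==> @isomorphic C ==> @isomorphic C) (@tens C).
Proof.
  intros X X' [f [f' [Hf'f Hff']]] Y Y' [k [k' [Hk'k Hkk']]].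
  exists (tensf f k), (tensf f' k'). split; rewrite <- tensf_comp.
  - rewrite Hf'f, Hk'k. apply tensf_id.
  - rewrite Hff', Hkk'. apply tensf_id.
Qed.

Lemma assoc_isomorphic (X Y Z : C) : isomorphic (X ⊗ (Y ⊗ Z)) ((X ⊗ Y) ⊗ Z).
Proof. exists (assoc X Y Z). apply assoc_iso. Qed.

End MonoidalIsomorphic.

Section CentralIdempotentIdeal.
Variables (C : MonoidalCategory) (e : C) (ci : CentralIdempotent e).

Lemma cl_ob_tens_r (X : C) : cl_ob e (X ⊗ e).
Proof. exact (clo_iso (ci_sigma_iso ci X) (clo_base e X)). Qed.

Lemma cl_ob_absorb_l (X : C) : cl_ob e X -> isomorphic X (e ⊗ X).
Proof.
  induction 1 as [X | X Y f Hf _ IH].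
  - rewrite assoc_isomorphic. symmetry. apply tens_isomorphic; [| reflexivity].
    exists (ci_Phi ci). apply ci_Phi_iso.
  - assert (HXY : isomorphic X Y) by (exists f; exact Hf).
    rewrite <- HXY. exact IH.
Qed.

Lemma cl_ob_absorb_r (X : C) : cl_ob e X -> isomorphic X (X ⊗ e).
Proof.
  intro HX. rewrite (cl_ob_absorb_l HX) at 1.
  exists (ci_sigma ci X). apply ci_sigma_iso.
Qed.

End CentralIdempotentIdeal.

Section IdealMeet.
Variables (C : MonoidalCategory) (e f : C).
Variables (ci_e : CentralIdempotent e) (ci_f : CentralIdempotent f).

Lemma cl_ob_meet_absorb_l (X : C) :
  cl_ob e X -> cl_ob f X -> isomorphic X ((e ⊗ f) ⊗ X).
Proof.
  intros He Hf. rewrite <- assoc_isomorphic, <- (cl_ob_absorb_l ci_f Hf).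
  exact (cl_ob_absorb_l ci_e He).
Qed.

Lemma cl_ob_meet_absorb_r (X : C) :
  cl_ob e X -> cl_ob f X -> isomorphic X (X ⊗ (e ⊗ f)).
Proof.
  intros He Hf. rewrite assoc_isomorphic, <- (cl_ob_absorb_r ci_e He).
  exact (cl_ob_absorb_r ci_f Hf).
Qed.

End IdealMeet.

Lemma pf_ob_isomorphic (C : MonoidalCategory) (e : C) (S : Subcat C)
    (F : PFunctor (ideal_of e) S) (X Y : C) :
  cl_ob e X -> isomorphic X Y -> isomorphic (pf_ob F X) (pf_ob F Y).
Proof.
  intros HX [k [k' [Hk'k Hkk']]].
  assert (Hk : is_iso k) by (exists k'; split; assumption).
  assert (Hk' : is_iso k') by (exists k; split; assumption).
  pose (pk := @clm_iso C e X Y k Hk HX : smor (ideal_of e) k).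
  pose (pk' := @clm_iso C e Y X k' Hk' (clo_iso Hk HX) : smor (ideal_of e) k').
  assert (F_id : forall Z (i : Hom Z Z) (pi : smor (ideal_of e) i),
             i = cid Z -> pf_hom F pi = cid (pf_ob F Z)).
  { intros Z i pi ->. apply pf_id. }
  exists (pf_hom F pk), (pf_hom F pk'). split.
  - rewrite <- (pf_comp F pk pk' (clm_comp pk pk')). apply F_id, Hk'k.
  - rewrite <- (pf_comp F pk' pk (clm_comp pk' pk)). apply F_id, Hkk'.
Qed.

Theorem lemma3p6 (G : Group) (C : MonoidalCategory) (HC : is_strict C)
    (P : PAData G C) (HP : is_partial_action P) (g h : G) :
  exists f : Hom (one P g ⊗ one P (gmul g h)) (pf_ob (T P g) (one P (ginv g) ⊗ one P h)),
    is_iso f.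
Proof.
  destruct HP as [_ [_ [HJ [_ [_ [_ [_ [_ [_ [_ [_ [Hrestr _]]]]]]]]]]]].
  set (U := one P (ginv g) ⊗ one P h).
  set (V := one P g ⊗ one P (gmul g h)).
  destruct (Hrestr g h) as [Hmaps [_ [_ [_ Hess]]]].
  destruct (Hess V (conj (clo_base _ _) (cl_ob_tens_r (one_ci P _) _)))
    as [X [k [[HX1 HX2] [_ Hk]]]].
  destruct (Hmaps U (conj (clo_base _ _) (cl_ob_tens_r (one_ci P _) _)))
    as [HTU1 HTU2].
  assert (HTXV : isomorphic (Tob P g X) V) by (exists k; exact Hk).
  change (isomorphic V (Tob P g U)). symmetry.
  transitivity (V ⊗ Tob P g U).
  { exact (cl_ob_meet_absorb_l (one_ci P _) (one_ci P _) HTU1 HTU2). }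
  rewrite <- HTXV.
  transitivity (Tob P g (X ⊗ U)).
  { exists (J P g HX1 (clo_base _ _)). apply HJ. }
  symmetry. apply (pf_ob_isomorphic (T P g) HX1).
  exact (cl_ob_meet_absorb_r (one_ci P _) (one_ci P _) HX1 HX2).
Qed.
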